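(* Let $f:\mathbb{R}^n\to\mathbb{R}$, $c:\mathbb{R}^n\to\mathbb{R}^m$, and consider Algorithm 1 (described in the context) under the Standing Assumption of the context. Then for every $k\in\mathbb{N}$ the inner loop over $j$ terminates finitely. Moreover, for all $k\in\mathbb{N}$, $$L_k\le L_{\max}:=\max\{L_{-1},\rho L\}\quad\text{and}\quad\gamma_{k,i}\le\gamma_{\max,i}:=\max\{\gamma_{-1,i},\rho\gamma_i\}\ \text{ for all } i\in\{1,\dots,m\}.$$
   Context: Notation: $g_k=\nabla f(x_k)$, $c_k=c(x_k)$, $J_k=\nabla c(x_k)^T$; $\phi(x,\tau)=\tau f(x)+\|c(x)\|_1$; $\Delta q(x,\tau,g,H,d)=-\tau(g^Td+\frac12\max\{d^THd,0\})+\|c(x)\|_1$. $\{H_k\}$ are symmetric with $\|H_k\|_2\le\kappa_H$ and $u^TH_ku\ge\zeta\|u\|_2^2$ whenever $J_ku=0$. Algorithm 1 (inputs $x_0$, $\tau_{-1}>0$, $\epsilon,\sigma,\eta\in(0,1)$, $\rho>1$, $L_{-1}>0$, $\gamma_{-1,i}>0$): at iteration $k$, $(d_k,y_k)$ solves $H_kd_k+J_k^Ty_k=-g_k$, $J_kd_k=-c_k$; stop if $g_k+J_k^Ty_k=0$ and $c_k=0$. Set $\tau_k^{trial}=\infty$ if $g_k^Td_k+\max\{d_k^TH_kd_k,0\}\le0$, else $\frac{(1-\sigma)\|c_k\|_1}{g_k^Td_k+\max\{d_k^TH_kd_k,0\}}$; $\tau_k=\tau_{k-1}$ if $\tau_{k-1}\le\tau_k^{trial}$,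 else $(1-\epsilon)\tau_k^{trial}$. Choose $L_{k,0}\in(0,L_{k-1}]$ and $\gamma_{k,i,0}\in(0,\gamma_{k-1,i}]$. For $j=0,1,\dots$: with $\Lambda_{k,j}=\tau_kL_{k,j}+\sum_i\gamma_{k,i,j}$, $\widehat\alpha_{k,j}=\frac{2(1-\eta)\Delta q(x_k,\tau_k,g_k,H_k,d_k)}{\Lambda_{k,j}\|d_k\|_2^2}$, $\widetilde\alpha_{k,j}=\widehat\alpha_{k,j}-\frac{4\|c_k\|_1}{\Lambda_{k,j}\|d_k\|_2^2}$; $\alpha_{k,j}=\widehat\alpha_{k,j}$ if $\widehat\alpha_{k,j}<1$, $1$ if $\widetilde\alpha_{k,j}\le1\le\widehat\alpha_{k,j}$, $\widetilde\alpha_{k,j}$ if $\widetilde\alpha_{k,j}>1$. Let (SD) be $\phi(x_k+\alpha_{k,j}d_k,\tau_k)\le\phi(x_k,\tau_k)-\eta\alpha_{k,j}\Delta q(x_k,\tau_k,g_k,H_k,d_k)$, (LF) be $f(x_k+\alpha_{k,j}d_k)\le f(x_k)+\alpha_{k,j}g_k^Td_k+\frac12L_{k,j}\alpha_{k,j}^2\|d_k\|_2^2$, (LC$_i$) be $|c_i(x_k+\alpha_{k,j}d_k)|\le|c_i(x_k)+\alpha_{k,j}\nabla c_i(x_k)^Td_k|+\frac12\gamma_{k,i,j}\alpha_{k,j}^2\|d_k\|_2^2$. If (SD) holds, or (LF) and all (LC$_i$) hold: set $L_k=L_{k,j}$, $\gamma_{k,i}=\gamma_{k,i,j}$, $\alpha_k=\alpha_{k,j}$,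 $x_{k+1}=x_k+\alpha_kd_k$ and end the inner loop. Otherwise $L_{k,j+1}=\rho L_{k,j}$ if (LF) fails (else $L_{k,j}$), and $\gamma_{k,i,j+1}=\rho\gamma_{k,i,j}$ if (LC$_i$) fails (else $\gamma_{k,i,j}$). Standing Assumption: there is an open convex set $\mathcal X$ containing all iterates and all trial points $x_k+\alpha_{k,j}d_k$; $f$ is $C^1$ and bounded below on $\mathcal X$, $\nabla f$ is bounded and Lipschitz with constant $L$ on $\mathcal X$; $c$ and $\nabla c^T$ are bounded on $\mathcal X$; each $\nabla c_i$ is Lipschitz with constant $\gamma_i$ on $\mathcal X$; singular values of $\nabla c(x)^T$ bounded away from zero uniformly over $\mathcal X$. *)

From HB Require Import structures.
From mathcomp Require Import all_boot all_order all_algebra.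
From mathcomp Require Import all_classical all_reals all_analysis.
Set Implicit Arguments. Unset Strict Implicit. Unset Printing Implicit Defensive.
Import Order.TTheory GRing.Theory Num.Theory.
Import numFieldNormedType.Exports.
Local Open Scope classical_set_scope.
Local Open Scope ring_scope.

Section Defs.
Variable R : realType.

Definition dot (p : nat) (u v : 'cV[R]_p) : R := (u^T *m v) 0 0.
Definition norm1 (p : nat) (v : 'cV[R]_p) : R := \sum_(i < p) `|v i 0|.
Definition sqnorm2 (p : nat) (v : 'cV[R]_p) : R := \sum_(i < p) (v i 0) ^+ 2.
Definition norm2 (p : nat) (v : 'cV[R]_p) : R := Num.sqrt (sqnorm2 v).

Variables n m : nat.

Definition gradc (J : 'cV[R]_n -> 'M[R]_(m, n)) (i : 'I_m) (x : 'cV[R]_n)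
  : 'cV[R]_n := (row i (J x))^T.

Definition convex_set (X : set 'cV[R]_n) : Prop :=
  forall a b, X a -> X b -> forall t : R, 0 <= t <= 1 ->
    X ((1 - t) *: a + t *: b).

Definition lipschitz_on (X : set 'cV[R]_n) (G : 'cV[R]_n -> 'cV[R]_n) (K : R) :=
  forall a b, X a -> X b -> norm2 (G a - G b) <= K * norm2 (a - b).

Definition standing_assumption (f : 'cV[R]_n -> R) (g : 'cV[R]_n -> 'cV[R]_n)
  (c : 'cV[R]_n -> 'cV[R]_m) (J : 'cV[R]_n -> 'M[R]_(m, n))
  (X : set 'cV[R]_n) (L : R) (gam : 'I_m -> R) : Prop :=
  [/\ open X, convex_set X,
   (* f is differentiable on X with gradient g (C^1 follows from Lipschitz g) *)
   (forall x, X x -> differentiable f x /\ forall v, 'd f x v = dot (g x) v) &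
   (forall i x, X x -> differentiable (fun z => c z i 0) x /\
                       forall v, 'd (fun z => c z i 0) x v = (J x *m v) i 0)] /\
  [/\
   (exists B, forall x, X x -> B <= f x),
   (exists B, forall x, X x -> norm2 (g x) <= B) &
   lipschitz_on X g L] /\
  [/\
   (exists B, forall x, X x -> norm2 (c x) <= B),
   (exists B, forall x v, X x -> norm2 (J x *m v) <= B * norm2 v),
   (forall i, lipschitz_on X (gradc J i) (gam i)) &
   (* singular values of nabla c(x)^T bounded away from zero uniformly *)
   (exists s, 0 < s /\ forall x (u : 'cV[R]_m), X x ->
            s * norm2 u <= norm2 ((J x)^T *m u))].

Definition phi (f : 'cV[R]_n -> R) (c : 'cV[R]_n -> 'cV[R]_m) x (tau : R) : R :=
  tau * f x + norm1 (c x).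

Definition Dq (c : 'cV[R]_n -> 'cV[R]_m) x (tau : R) (g : 'cV[R]_n)
  (H : 'M[R]_n) (d : 'cV[R]_n) : R :=
  - tau * (dot g d + 2^-1 * Num.max (dot d (H *m d)) 0) + norm1 (c x).

(* merit parameter update: tau_k from tau_{k-1} (tau_trial = +oo encoded
   by the first branch) *)
Definition tau_update (sigma eps taup : R) (gk : 'cV[R]_n) (ck : 'cV[R]_m)
  (Hk : 'M[R]_n) (dk : 'cV[R]_n) : R :=
  let den := dot gk dk + Num.max (dot dk (Hk *m dk)) 0 in
  if den <= 0 then taup
  else let trial := (1 - sigma) * norm1 ck / den in
       if taup <= trial then taup else (1 - eps) * trial.

Definition alpha_step (eta tau Lkj : R) (gkj : 'I_m -> R) (dq : R)
  (ck : 'cV[R]_m) (dk : 'cV[R]_n) : R :=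
  let Lam := tau * Lkj + \sum_(i < m) gkj i in
  let ahat := 2 * (1 - eta) * dq / (Lam * sqnorm2 dk) in
  let atil := ahat - 4 * norm1 ck / (Lam * sqnorm2 dk) in
  if ahat < 1 then ahat else if atil <= 1 then 1 else atil.

Definition test_SD f c x tau g H d (eta alpha : R) : Prop :=
  phi f c (x + alpha *: d) tau <= phi f c x tau - eta * alpha * Dq c x tau g H d.

Definition test_LF (f : 'cV[R]_n -> R) x g d (Lkj alpha : R) : Prop :=
  f (x + alpha *: d) <= f x + alpha * dot g d + 2^-1 * Lkj * alpha ^+ 2 * sqnorm2 d.

Definition test_LC (c : 'cV[R]_n -> 'cV[R]_m) (J : 'cV[R]_n -> 'M[R]_(m, n))
  x d (i : 'I_m) (gkji alpha : R) : Prop :=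
  `|c (x + alpha *: d) i 0| <= `|c x i 0 + alpha * (J x *m d) i 0|
                                + 2^-1 * gkji * alpha ^+ 2 * sqnorm2 d.

Section Run.
Variables (f : 'cV[R]_n -> R) (g : 'cV[R]_n -> 'cV[R]_n)
  (c : 'cV[R]_n -> 'cV[R]_m) (J : 'cV[R]_n -> 'M[R]_(m, n)).
Variables (taum1 eps sigma eta rho Lm1 : R) (gm1 : 'I_m -> R).
Variables (x : nat -> 'cV[R]_n) (H : nat -> 'M[R]_n)
  (d : nat -> 'cV[R]_n) (y : nat -> 'cV[R]_m) (tau : nat -> R)
  (Lkj : nat -> nat -> R) (gkj : nat -> nat -> 'I_m -> R)
  (Lk : nat -> R) (gk : nat -> 'I_m -> R).

Definition stop_test (k : nat) : Prop :=
  g (x k) + (J (x k))^T *m y k = 0 /\ c (x k) = 0.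

Definition reached (k : nat) : Prop := forall k', (k' < k)%N -> ~ stop_test k'.
Definition active (k : nat) : Prop := reached k /\ ~ stop_test k.

Definition tau_prev (k : nat) : R := if k is k'.+1 then tau k' else taum1.
Definition L_prev (k : nat) : R := if k is k'.+1 then Lk k' else Lm1.
Definition gam_prev (k : nat) (i : 'I_m) : R :=
  if k is k'.+1 then gk k' i else gm1 i.

Definition alpha_kj (k j : nat) : R :=
  alpha_step eta (tau k) (Lkj k j) (gkj k j)
    (Dq c (x k) (tau k) (g (x k)) (H k) (d k)) (c (x k)) (d k).

Definition LF_kj (k j : nat) : Prop :=
  test_LF f (x k) (g (x k)) (d k) (Lkj k j) (alpha_kj k j).
Definition LC_kj (k j : nat) (i : 'I_m) : Prop :=
  test_LC c J (x k) (d k) i (gkj k j i) (alpha_kj k j).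
Definition accept (k j : nat) : Prop :=
  test_SD f c (x k) (tau k) (g (x k)) (H k) (d k) eta (alpha_kj k j)
  \/ (LF_kj k j /\ forall i, LC_kj k j i).

Definition algorithm1_run : Prop :=
  forall k, reached k ->
  [/\ H k *m d k + (J (x k))^T *m y k = - g (x k),
      J (x k) *m d k = - c (x k) &
      ~ stop_test k ->
      [/\ tau k = tau_update sigma eps (tau_prev k) (g (x k)) (c (x k)) (H k) (d k),
          0 < Lkj k 0 <= L_prev k,
          (forall i, 0 < gkj k 0 i <= gam_prev k i),
          (forall j, ~ accept k j ->
             Lkj k j.+1 = (if `[< LF_kj k j >] then Lkj k j else rho * Lkj k j)
             /\ forall i, gkj k j.+1 i =
                  (if `[< LC_kj k j i >] then gkj k j i else rho * gkj k j i)) &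
          (forall j, accept k j -> (forall j', (j' < j)%N -> ~ accept k j') ->
             [/\ Lk k = Lkj k j, (forall i, gk k i = gkj k j i) &
                 x k.+1 = x k + alpha_kj k j *: d k])]].

(* Standing Assumption, part on the run: iterates and trial points lie in X *)
Definition run_in (X : set 'cV[R]_n) : Prop :=
  (forall k, reached k -> X (x k)) /\
  (forall k j, active k -> (forall j', (j' < j)%N -> ~ accept k j') ->
     X (x k + alpha_kj k j *: d k)).

Definition hessians_ok (kappaH zeta : R) : Prop :=
  forall k, reached k ->
  [/\ (H k)^T = H k,
      (forall v, norm2 (H k *m v) <= kappaH * norm2 v) &
      (forall u, J (x k) *m u = 0 -> zeta * sqnorm2 u <= dot u (H k *m u))].
End Run.

End Defs.

From Pilot Require Import Defs.
From HB Require Import structures.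
From mathcomp Require Import all_boot all_order all_algebra.
From mathcomp Require Import all_classical all_reals all_analysis.
From mathcomp Require Import ring lra.
Set Implicit Arguments. Unset Strict Implicit. Unset Printing Implicit Defensive.
Import Order.TTheory GRing.Theory Num.Theory.
Import numFieldNormedType.Exports.
Local Open Scope classical_set_scope.
Local Open Scope ring_scope.

(* Where the Lipschitz bounds hold, the descent lemma
   |F (x + v) - F x - <grad F x, v>| <= K |v|^2 / 2 (mean value theorem plus
   Cauchy-Schwarz) shows that (LF) holds as soon as L_{k,j} >= L and (LC_i) as
   soon as gamma_{k,i,j} >= gamma_i.  So an estimate is multiplied by rho only
   while it is below its Lipschitz constant, which keeps it below
   max (initial value, rho * constant).  Every rejected trial multiplies at
   least one of the m + 1 estimates by rho, so their product grows
   geometrically while staying bounded: the inner loop stops.  Finally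
   L_{k,0} <= L_{k-1} and gamma_{k,i,0} <= gamma_{k-1,i} carry the bounds from
   one iteration to the next. *)

Section Euclidean.
Variables (R : realType) (p : nat).
Implicit Types u v : 'cV[R]_p.

Lemma dotE u v : dot u v = \sum_(i < p) u i 0 * v i 0.
Proof. by rewrite /dot !mxE; apply: eq_bigr => i _; rewrite !mxE. Qed.

Lemma dotBl u w v : dot (u - w) v = dot u v - dot w v.
Proof. by rewrite !dotE -sumrB; apply: eq_bigr => i _; rewrite !mxE mulrBl. Qed.

Lemma dotNl u v : dot (- u) v = - dot u v.
Proof. by rewrite !dotE -sumrN; apply: eq_bigr => i _; rewrite !mxE mulNr. Qed.

Lemma dotZr u v t : dot u (t *: v) = t * dot u v.
Proof. by rewrite !dotE mulr_sumr; apply: eq_bigr => i _; rewrite !mxE mulrCA. Qed.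

Lemma sqnorm2_ge0 v : 0 <= sqnorm2 v.
Proof. by apply: sumr_ge0 => i _; rewrite sqr_ge0. Qed.

Lemma sqnorm2Z t v : sqnorm2 (t *: v) = t ^+ 2 * sqnorm2 v.
Proof.
by rewrite /sqnorm2 mulr_sumr; apply: eq_bigr => i _; rewrite !mxE exprMn.
Qed.

Lemma norm2_ge0 v : 0 <= norm2 v.
Proof. exact: sqrtr_ge0. Qed.

Lemma sqr_norm2 v : norm2 v ^+ 2 = sqnorm2 v.
Proof. by rewrite sqr_sqrtr // sqnorm2_ge0. Qed.

Lemma norm2Z t v : norm2 (t *: v) = `|t| * norm2 v.
Proof. by rewrite /norm2 sqnorm2Z sqrtrM ?sqr_ge0 // sqrtr_sqr. Qed.

Lemma norm2N v : norm2 (- v) = norm2 v.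
Proof. by rewrite -scaleN1r norm2Z normrN normr1 mul1r. Qed.

Lemma norm2_eq0 v : norm2 v = 0 -> v = 0.
Proof.
move=> /eqP; rewrite sqrtr_eq0 => v_le0.
have /eqP/psumr_eq0P v0 : sqnorm2 v == 0 by rewrite eq_le v_le0 sqnorm2_ge0.
apply/matrixP => i j; rewrite ord1 mxE; apply/eqP.
by rewrite -sqrf_eq0 v0 // => k _; exact: sqr_ge0.
Qed.

Lemma dot_le_norm2 u v : dot u v <= norm2 u * norm2 v.
Proof.
set A := norm2 u; set B := norm2 v.
have [AB0 | AB_neq0] := eqVneq (A * B) 0.
  move: AB0 => /eqP; rewrite mulf_eq0 => /orP[] /eqP/norm2_eq0 ->;
  by rewrite dotE big1 ?mulr_ge0 ?norm2_ge0 // => i _; rewrite mxE (mul0r, mulr0).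
have AB_gt0 : 0 < A * B by rewrite lt_def AB_neq0 mulr_ge0 ?norm2_ge0.
rewrite -(ler_pM2l AB_gt0) -subr_ge0.
have -> : A * B * (A * B) - A * B * dot u v
    = 2^-1 * \sum_(i < p) (B * u i 0 - A * v i 0) ^+ 2.
  have sumE (w : 'cV[R]_p) (s : R) :
      \sum_(i < p) (s * w i 0) ^+ 2 = s ^+ 2 * norm2 w ^+ 2.
    by rewrite sqr_norm2 mulr_sumr; apply: eq_bigr => i _; rewrite exprMn.
  rewrite (eq_bigr (fun i => (B * u i 0) ^+ 2 + (A * v i 0) ^+ 2
                            - 2 * (A * B) * (u i 0 * v i 0))); last first.
    by move=> i _; ring.
  by rewrite sumrB big_split /= !sumE -mulr_sumr -dotE -/A -/B; field.
by rewrite mulr_ge0 ?invr_ge0 // sumr_ge0 // => i _; exact: sqr_ge0.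
Qed.

Lemma normr_dot_le u v : `|dot u v| <= norm2 u * norm2 v.
Proof.
by rewrite ler_norml dot_le_norm2 andbT lerNl -dotNl -(norm2N u) dot_le_norm2.
Qed.

End Euclidean.

Section Descent.
Variables (R : realType) (n : nat).
Implicit Types (F : 'cV[R]_n -> R) (G : 'cV[R]_n -> 'cV[R]_n) (X : set 'cV[R]_n).

Definition gradient_on X F G :=
  forall z, X z -> differentiable F z /\ forall w, 'd F z w = dot (G z) w.

Lemma gradient_onN X F G : gradient_on X F G -> gradient_on X (- F) (- G).
Proof.
move=> FG z Xz; have [dF dFE] := FG z Xz.
by split=> [|w]; [exact: differentiableN | rewrite diffN // dotNl -dFE].
Qed.

Lemma lipschitz_onN X G K :
  Defs.lipschitz_on X G K -> Defs.lipschitz_on X (- G) K.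
Proof. by move=> lipG a b Xa Xb; rewrite /= -opprD norm2N; exact: lipG. Qed.

Lemma convex_segment X x v t :
  Defs.convex_set X -> X x -> X (x + v) -> 0 <= t <= 1 -> X (x + t *: v).
Proof.
move=> cvxX Xx Xxv t01; have := cvxX _ _ Xx Xxv t t01.
by rewrite scalerDr scalerBl scale1r addrA subrK.
Qed.

Lemma is_derive_line F x v t : differentiable F (x + t *: v) ->
  is_derive t 1 (fun s => F (x + s *: v)) ('d F (x + t *: v) v).
Proof.
move=> dF.
have quotE : (fun h : R => h^-1 *: (((fun s => F (x + s *: v)) \o shift t) (h *: 1)
                                     - F (x + t *: v)))
    = (fun h : R => h^-1 *: ((F \o shift (x + t *: v)) (h *: v) - F (x + t *: v))).
  apply/funext => h /=; rewrite /shift /=.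
  by congr (_ *: (F _ - _)); rewrite -[h%:A]/(h * 1) mulr1 scalerDl addrCA addrA.
apply: DeriveDef; first by rewrite /derivable quotE; exact: diff_derivable.
by rewrite /derive quotE -/(derive F (x + t *: v) v) deriveE.
Qed.

(* Mean value theorem for t |-> F (x + t v) - t <G x, v> - K t^2 |v|^2 / 2,
   whose derivative is nonpositive on [0, 1] by Cauchy-Schwarz. *)
Lemma descent_upper X F G K x v :
  Defs.convex_set X -> gradient_on X F G -> Defs.lipschitz_on X G K ->
  X x -> X (x + v) ->
  F (x + v) - F x - dot (G x) v <= 2^-1 * K * sqnorm2 v.
Proof.
move=> cvxX FG lipG Xx Xxv.
set D := dot (G x) v; set S := sqnorm2 v.
have Xt (t : R) : 0 <= t <= 1 -> X (x + t *: v) by exact: convex_segment.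
pose k : R -> R :=
  (fun s => F (x + s *: v)) - D \*: @id R - (2^-1 * K * S) \*: (@id R) ^+ 2.
pose dk t := dot (G (x + t *: v)) v - D - K * S * t.
have k_deriv (t : R) : 0 <= t <= 1 -> is_derive t 1 k (dk t).
  move=> t01; have [dF dFE] := FG _ (Xt t t01).
  have := is_derive_line dF; rewrite dFE => Fline.
  apply: is_derive_eq.
  change (dot (G (x + t *: v)) v - D * 1 - 2^-1 * K * S * (2 * t ^+ 1 * 1) = dk t).
  by rewrite /dk expr1; field.
have k_cont : {within `[0, 1], continuous k}.
  by apply: derivable_within_continuous => t; rewrite in_itv /= => /k_deriv [].
have k_deriv_oo (t : R) : t \in `]0, 1[ -> is_derive t 1 k (dk t).
  by rewrite in_itv /= => /andP[t_gt0 t_lt1]; apply: k_deriv; rewrite !ltW.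
have [t t01 kE] := MVT_segment ler01 k_deriv_oo k_cont.
have {}t01 : 0 <= t <= 1 by rewrite in_itv /= in t01.
have dk_le0 : dk t <= 0.
  rewrite /dk /D -dotBl subr_le0.
  apply: le_trans (ler_norm _) _; apply: le_trans (normr_dot_le _ _) _.
  have := lipG _ _ (Xt t t01) Xx.
  rewrite [x + _]addrC addrK norm2Z ger0_norm; last by case/andP: t01.
  move=> /(ler_wpM2r (norm2_ge0 v)) /le_trans; apply.
  by rewrite /S -sqr_norm2; lra.
have k10 : k 1 - k 0 = F (x + v) - F x - D - 2^-1 * K * S.
  change (F (x + 1 *: v) - D * 1 - 2^-1 * K * S * (1 * 1)
    - (F (x + 0 *: v) - D * 0 - 2^-1 * K * S * (0 * 0))
    = F (x + v) - F x - D - 2^-1 * K * S).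
  by rewrite scale1r scale0r addr0; ring.
by rewrite -subr_le0 -k10 kE subr0 mulr1.
Qed.

Lemma descent_lemma X F G K x v :
  Defs.convex_set X -> gradient_on X F G -> Defs.lipschitz_on X G K ->
  X x -> X (x + v) ->
  `|F (x + v) - F x - dot (G x) v| <= 2^-1 * K * sqnorm2 v.
Proof.
move=> cvxX FG lipG Xx Xxv.
rewrite ler_norml (descent_upper cvxX FG lipG Xx Xxv) andbT lerNl.
have := descent_upper cvxX (gradient_onN FG) (lipschitz_onN lipG) Xx Xxv.
by rewrite !opprfctE dotNl -!opprD.
Qed.

Lemma descent_step X F G K Lc x d a :
  Defs.convex_set X -> gradient_on X F G -> Defs.lipschitz_on X G K ->
  X x -> X (x + a *: d) -> K <= Lc ->
  `|F (x + a *: d) - F x - a * dot (G x) d| <= 2^-1 * Lc * a ^+ 2 * sqnorm2 d.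
Proof.
move=> cvxX FG lipG Xx Xxd KL.
rewrite -dotZr; apply: le_trans (descent_lemma cvxX FG lipG Xx Xxd) _.
rewrite sqnorm2Z mulrA ler_wpM2r ?sqnorm2_ge0 // ler_wpM2r ?sqr_ge0 //.
by rewrite ler_wpM2l // invr_ge0 ler0n.
Qed.

Lemma test_LF_of_lipschitz X F G K Lc x d a :
  Defs.convex_set X -> gradient_on X F G -> Defs.lipschitz_on X G K ->
  X x -> X (x + a *: d) -> K <= Lc -> test_LF F x (G x) d Lc a.
Proof.
move=> cvxX FG lipG Xx Xxd KL.
have /ler_normlP[_] := descent_step cvxX FG lipG Xx Xxd KL.
by rewrite /test_LF; lra.
Qed.

Variable m : nat.
Implicit Types (c : 'cV[R]_n -> 'cV[R]_m) (J : 'cV[R]_n -> 'M[R]_(m, n)).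

Lemma dot_gradc J i z w : dot (gradc J i z) w = (J z *m w) i 0.
Proof. by rewrite /dot /gradc trmxK -row_mul mxE. Qed.

Lemma test_LC_of_lipschitz X c J i K gc x d a :
  Defs.convex_set X ->
  (forall z, X z -> differentiable (fun z => c z i 0) z /\
                    forall w, 'd (fun z => c z i 0) z w = (J z *m w) i 0) ->
  Defs.lipschitz_on X (gradc J i) K ->
  X x -> X (x + a *: d) -> K <= gc -> test_LC c J x d i gc a.
Proof.
move=> cvxX dc lipc Xx Xxd KL.
have cJ : gradient_on X (fun z => c z i 0) (gradc J i).
  move=> z Xz; have [dcz dczE] := dc z Xz.
  by split=> // w; rewrite dczE dot_gradc.
have := descent_step cvxX cJ lipc Xx Xxd KL; rewrite dot_gradc /test_LC => bound.
have -> : c (x + a *: d) i 0 = (c x i 0 + a * (J x *m d) i 0)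
    + (c (x + a *: d) i 0 - c x i 0 - a * (J x *m d) i 0) by ring.
by apply: le_trans (ler_normD _ _) _; rewrite lerD2l.
Qed.

End Descent.

Definition none_before (P : nat -> Prop) (j : nat) :=
  forall j', (j' < j)%N -> ~ P j'.

Lemma exists_first (P : nat -> Prop) :
  (exists j, P j) -> exists j, P j /\ none_before P j.
Proof.
move=> [j0 Pj0]; have exPb : exists j, `[< P j >] by exists j0; apply/asboolP.
case: (ex_minnP exPb) => j /asboolP Pj jmin; exists j; split=> // j' j'j Pj'.
by have := jmin j' (asboolT Pj'); rewrite leqNgt j'j.
Qed.

Lemma none_before_le (P : nat -> Prop) i j :
  (i <= j)%N -> none_before P j -> none_before P i.
Proof. by move=> ij Pj k ki; apply: Pj; exact: leq_trans ki ij. Qed.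

Section Backtracking.
Variable R : archiRealFieldType.

Lemma bernoulli_ineq (rho : R) (j : nat) :
  1 <= rho -> 1 + j%:R * (rho - 1) <= rho ^+ j.
Proof.
move=> rho_ge1; elim: j => [|j IH]; first by rewrite mul0r addr0 expr0.
rewrite exprS -natr1; apply: le_trans (ler_wpM2l (le_trans ler01 rho_ge1) IH).
by have := mulr_ge0 (ler0n R j) (sqr_ge0 (rho - 1)); nra.
Qed.

Lemma expr_unbounded (rho B : R) : 1 < rho -> exists j, B < rho ^+ j.
Proof.
move=> rho_gt1; have rho1_gt0 : 0 < rho - 1 by rewrite subr_gt0.
exists (Num.truncn (B / (rho - 1))).+1.
apply: lt_le_trans (bernoulli_ineq _ (ltW rho_gt1)).
have := truncnS_gt (B / (rho - 1)); rewrite ltr_pdivrMr // => /lt_le_trans; apply.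
by rewrite lerDr.
Qed.

Lemma backtrack_le_max (rho T : R) (a : nat -> R) (P : nat -> Prop) (N : nat) :
  0 <= rho ->
  (forall j, (j < N)%N -> a j.+1 = if `[< P j >] then a j else rho * a j) ->
  (forall j, (j < N)%N -> T <= a j -> P j) ->
  a N <= Num.max (a 0%N) (rho * T).
Proof.
move=> rho_ge0 a_next a_ge_P; elim: N a_next a_ge_P => [|N IH] a_next a_ge_P.
  by rewrite le_max lexx.
rewrite a_next //; case: asboolP => [_ | notP].
  by apply: IH => j jN; [apply: a_next | apply: a_ge_P]; exact: ltnW.
rewrite le_max ler_wpM2l ?orbT // ltW // ltNge.
by apply/negP => /(a_ge_P N (ltnSn N)).
Qed.

End Backtracking.

Section BacktrackingTermination.
Variables (R : archiRealFieldType) (m : nat) (rho : R).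
Variables (a : nat -> R) (b : nat -> 'I_m -> R).
Variables (PF : nat -> Prop) (PC : nat -> 'I_m -> Prop) (A : nat -> Prop).
Hypothesis rho_gt1 : 1 < rho.
Hypothesis tests_accept : forall j, PF j -> (forall i, PC j i) -> A j.
Hypothesis backtrack : forall j, ~ A j ->
  a j.+1 = (if `[< PF j >] then a j else rho * a j) /\
  forall i, b j.+1 i = (if `[< PC j i >] then b j i else rho * b j i).

Let rho_gt0 : 0 < rho. Proof. exact: lt_trans ltr01 rho_gt1. Qed.

Let potential j := a j * \prod_(i < m) b j i.

Lemma backtrack_gt0 j : 0 < a 0%N -> (forall i, 0 < b 0%N i) ->
  none_before A j -> 0 < a j /\ forall i, 0 < b j i.
Proof.
move=> a0 b0; elim: j => [|j IH] rejA; first by [].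
have [aj bj] := IH (none_before_le (leqnSn j) rejA).
have [-> b_next] := backtrack (rejA j (ltnSn j)).
split=> [|i]; first by case: asboolP => _ //; rewrite mulr_gt0.
by rewrite b_next; case: asboolP => _ //; rewrite mulr_gt0.
Qed.

Lemma backtrack_le (P : Prop) (u : R) :
  0 <= u -> u <= if `[< P >] then u else rho * u.
Proof. by move=> u_ge0; case: asboolP => _ //; rewrite ler_peMl // ltW. Qed.

(* Some test failed, so one factor of the potential was multiplied by rho. *)
Lemma potential_step j : ~ A j -> 0 < a j -> (forall i, 0 < b j i) ->
  rho * potential j <= potential j.+1.
Proof.
move=> notA aj bj; have [a_next b_next] := backtrack notA.
have b_le i : b j i <= b j.+1 i by rewrite b_next backtrack_le // ltW.
rewrite /potential a_next; case: asboolP => [PFj | notPF]; last first.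
  rewrite mulrA ler_pM2l ?mulr_gt0 //.
  by apply: ler_prod => i _; rewrite (ltW (bj i)) b_le.
have [i0 notPC] : exists i0, ~ PC j i0.
  apply: contrapT => allPC; apply: notA; apply: tests_accept => // i.
  by apply: contrapT => notPCi; apply: allPC; exists i.
rewrite mulrCA ler_pM2l // (bigD1 i0) // [X in _ <= X](bigD1 i0) //= mulrA.
apply: ler_pM.
- by rewrite mulr_ge0 // ltW.
- by apply: prodr_ge0 => i _; rewrite ltW.
- by rewrite b_next; case: asboolP.
- by apply: ler_prod => i _; rewrite (ltW (bj i)) b_le.
Qed.

Lemma backtracking_terminates (Ba : R) (Bb : 'I_m -> R) :
  0 < a 0%N -> (forall i, 0 < b 0%N i) ->
  (forall j, none_before A j -> a j <= Ba /\ forall i, b j i <= Bb i) ->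
  exists j, A j.
Proof.
move=> a0 b0 bounded; apply: contrapT => noA.
have rejA j : none_before A j by move=> j' _ Aj'; apply: noA; exists j'.
have pos j := backtrack_gt0 a0 b0 (rejA j).
have grow j : rho ^+ j * potential 0%N <= potential j.
  elim: j => [|j IH]; first by rewrite expr0 mul1r.
  have [aj bj] := pos j; rewrite exprS -mulrA.
  apply: le_trans (potential_step (rejA j.+1 j (ltnSn j)) aj bj).
  by rewrite ler_pM2l.
have P0_gt0 : 0 < potential 0%N by rewrite mulr_gt0 // prodr_gt0.
pose B := Ba * \prod_(i < m) Bb i.
have P_le j : potential j <= B.
  have [aj bj] := pos j; have [aB bB] := bounded j (rejA j).
  apply: ler_pM => //; first exact: ltW.
    by apply: prodr_ge0 => i _; rewrite ltW.
  by apply: ler_prod => i _; rewrite (ltW (bj i)) bB.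
have [j Bj] := expr_unbounded (B / potential 0%N) rho_gt1.
move: (le_trans (grow j) (P_le j)); apply/negP; rewrite -ltNge.
by rewrite -ltr_pdivrMr.
Qed.

End BacktrackingTermination.

Lemma active_pred (R : realType) (n m : nat) (g : 'cV[R]_n -> 'cV[R]_n)
  (c : 'cV[R]_n -> 'cV[R]_m) (J : 'cV[R]_n -> 'M[R]_(m, n))
  (x : nat -> 'cV[R]_n) (y : nat -> 'cV[R]_m) k :
  active g c J x y k.+1 -> active g c J x y k.
Proof.
by case=> reached _; split=> [k' k'k|]; apply: reached => //; exact: ltnW.
Qed.

Section InnerLoop.
Variables (R : realType) (n m : nat).
Variables (f : 'cV[R]_n -> R) (g : 'cV[R]_n -> 'cV[R]_n).
Variables (c : 'cV[R]_n -> 'cV[R]_m) (J : 'cV[R]_n -> 'M[R]_(m, n)).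
Variables (X : set 'cV[R]_n) (L : R) (gam : 'I_m -> R).
Variables (taum1 eps sigma eta rho Lm1 : R) (gm1 : 'I_m -> R).
Variables (x : nat -> 'cV[R]_n) (H : nat -> 'M[R]_n) (d : nat -> 'cV[R]_n).
Variables (y : nat -> 'cV[R]_m) (tau : nat -> R).
Variables (Lkj : nat -> nat -> R) (gkj : nat -> nat -> 'I_m -> R).
Variables (Lk : nat -> R) (gk : nat -> 'I_m -> R).
Hypothesis SA : standing_assumption f g c J X L gam.
Hypothesis run :
  algorithm1_run f g c J taum1 eps sigma eta rho Lm1 gm1 x H d y tau Lkj gkj Lk gk.
Hypothesis run_X : run_in f g c J eta x H d y tau Lkj gkj X.
Hypothesis rho_gt1 : 1 < rho.

Local Notation active_k := (active g c J x y).
Local Notation accept_kj := (accept f g c J eta x H d tau Lkj gkj).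
Local Notation LF_kj := (LF_kj f g c eta x H d tau Lkj gkj).
Local Notation LC_kj := (LC_kj g c J eta x H d tau Lkj gkj).

Lemma LF_kj_of_ge k j :
  active_k k -> none_before (accept_kj k) j -> L <= Lkj k j -> LF_kj k j.
Proof.
case: SA => [[_ cvxX df _] [[_ _ lipg] _]] actk rej_j.
exact: test_LF_of_lipschitz cvxX df lipg (run_X.1 k actk.1) (run_X.2 k j actk rej_j).
Qed.

Lemma LC_kj_of_ge k j i :
  active_k k -> none_before (accept_kj k) j -> gam i <= gkj k j i -> LC_kj k j i.
Proof.
case: SA => [[_ cvxX _ dc] [_ [_ _ lipc _]]] actk rej_j.
exact: test_LC_of_lipschitz cvxX (dc i) (lipc i) (run_X.1 k actk.1)
  (run_X.2 k j actk rej_j).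
Qed.

Lemma inner_loop_bounded k N : active_k k -> none_before (accept_kj k) N ->
  Lkj k N <= Num.max (Lkj k 0%N) (rho * L) /\
  forall i, gkj k N i <= Num.max (gkj k 0%N i) (rho * gam i).
Proof.
move=> actk rejN; have [_ _ /(_ actk.2) [_ _ _ backtrack _]] := run actk.1.
have rho_ge0 : 0 <= rho by rewrite ltW // (lt_trans ltr01).
have rej j : (j < N)%N -> none_before (accept_kj k) j.
  by move=> jN; exact: none_before_le (ltnW jN) rejN.
split=> [|i].
  apply: (backtrack_le_max (P := LF_kj k) rho_ge0) => j jN.
  - exact: (backtrack j (rejN j jN)).1.
  - exact: LF_kj_of_ge actk (rej j jN).
apply: (backtrack_le_max (a := gkj k ^~ i) (P := LC_kj k ^~ i) rho_ge0) => j jN.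
- exact: (backtrack j (rejN j jN)).2 i.
- exact: LC_kj_of_ge actk (rej j jN).
Qed.

Lemma inner_loop_terminates k : active_k k -> exists j, accept_kj k j.
Proof.
move=> actk; have [_ _ /(_ actk.2) [_ /andP[L0_gt0 _] g0 backtrack _]] := run actk.1.
have tests_accept j : LF_kj k j -> (forall i, LC_kj k j i) -> accept_kj k j.
  by move=> LFj LCj; right.
apply: (backtracking_terminates rho_gt1 tests_accept backtrack L0_gt0 _
  (fun j => inner_loop_bounded actk)).
by move=> i; case/andP: (g0 i).
Qed.

Lemma accepted_bounds k : active_k k ->
  [/\ exists j, accept_kj k j,
      Lk k <= Num.max (L_prev Lm1 Lk k) (rho * L) &
      forall i, gk k i <= Num.max (gam_prev gm1 gk k i) (rho * gam i)].
Proof.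
move=> actk; have [_ _ /(_ actk.2) [_ /andP[_ L0_le] g0 _ select]] := run actk.1.
have [j [acc_j rej_j]] := exists_first (inner_loop_terminates actk).
have [Lkj_le gkj_le] := inner_loop_bounded actk rej_j.
have [-> gk_eq _] := select j acc_j rej_j.
split=> [|| i]; first by exists j.
  exact: le_trans Lkj_le (le_max2 L0_le (lexx _)).
have [_ g0_le] := andP (g0 i).
by rewrite gk_eq; exact: le_trans (gkj_le i) (le_max2 g0_le (lexx _)).
Qed.

End InnerLoop.

Theorem lemma2p8 (R : realType) (n m : nat)
  (f : 'cV[R]_n -> R) (g : 'cV[R]_n -> 'cV[R]_n)
  (c : 'cV[R]_n -> 'cV[R]_m) (J : 'cV[R]_n -> 'M[R]_(m, n))
  (X : set 'cV[R]_n) (L : R) (gam : 'I_m -> R) (kappaH zeta : R)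
  (taum1 eps sigma eta rho Lm1 : R) (gm1 : 'I_m -> R)
  (x : nat -> 'cV[R]_n) (H : nat -> 'M[R]_n)
  (d : nat -> 'cV[R]_n) (y : nat -> 'cV[R]_m) (tau : nat -> R)
  (Lkj : nat -> nat -> R) (gkj : nat -> nat -> 'I_m -> R)
  (Lk : nat -> R) (gk : nat -> 'I_m -> R) :
  0 < taum1 -> 0 < eps < 1 -> 0 < sigma < 1 -> 0 < eta < 1 -> 1 < rho ->
  0 < Lm1 -> (forall i, 0 < gm1 i) -> 0 < zeta ->
  standing_assumption f g c J X L gam ->
  algorithm1_run f g c J taum1 eps sigma eta rho Lm1 gm1 x H d y tau Lkj gkj Lk gk ->
  run_in f g c J eta x H d y tau Lkj gkj X ->
  hessians_ok g c J x H y kappaH zeta ->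
  forall k, active g c J x y k ->
    (exists j, accept f g c J eta x H d tau Lkj gkj k j) /\
    Lk k <= Num.max Lm1 (rho * L) /\
    (forall i, gk k i <= Num.max (gm1 i) (rho * gam i)).
Proof.
(* L_{k,0} > 0 and gamma_{k,i,0} > 0 are part of the run; only rho > 1 is used. *)
move=> _ _ _ _ rho_gt1 _ _ _ SA run run_X _.
elim=> [|k IH] actk;
  have [acc Lk_le gk_le] := accepted_bounds SA run run_X rho_gt1 actk; first by [].
have [_ [Lk_prev gk_prev]] := IH (active_pred actk).
split=> //; split=> [|i]; [apply: le_trans Lk_le _ | apply: le_trans (gk_le i) _].
  by rewrite ge_max Lk_prev le_max lexx orbT.
by rewrite ge_max gk_prev le_max lexx orbT.
Qed.
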